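(* Let $H$ and $K$ be finite groups such that at least one of them is solvable. Then $\mathrm{MaxDim}(H \times K) = \mathrm{MaxDim}(H) + \mathrm{MaxDim}(K)$.
   Context: All groups are finite. A finite set $\{H_1,\dots,H_n\}$ of subgroups of a group $G$ is in general position if for every $1 \le j \le n$, $\bigcap_{i \neq j} H_i \supsetneq \bigcap_{i} H_i$. $\mathrm{MaxDim}(G)$ is the largest cardinality of a collection of maximal subgroups of $G$ that is in general position. *)

From mathcomp Require Import all_boot all_fingroup all_solvable.
Set Implicit Arguments. Unset Strict Implicit. Unset Printing Implicit Defensive.
Local Open Scope group_scope.

(* Intersection of a family F of subsets of G, taken inside G
   (so the empty intersection is G itself). *)
Definition capG (gT : finGroupType) (G : {set gT}) (F : {set {set gT}}) : {set gT} :=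
  G :&: \bigcap_(X in F) X.

Definition gen_pos (gT : finGroupType) (G : {set gT}) (F : {set {set gT}}) : bool :=
  [forall X in F, capG G F \proper capG G (F :\ X)].

Definition MaxDim (gT : finGroupType) (G : {set gT}) : nat :=
  \max_(F : {set {set gT}} | [forall X in F, maximal X G] && gen_pos G F) #|F|.

From mathcomp Require Import all_boot all_fingroup all_solvable.
Set Implicit Arguments. Unset Strict Implicit. Unset Printing Implicit Defensive.
Local Open Scope group_scope.

(* Write G = A \x B.  Lifting families of maximal subgroups of A and B along
   Y |-> Y * B and Z |-> Z * A gives MaxDim A + MaxDim B <= MaxDim G.
   Conversely, let M be a maximal subgroup of G containing neither factor.
   Then M :&: A is a maximal normal subgroup of A, and A and B meet M in
   subgroups of the same index #|G : M|; if A or B is solvable this index is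
   prime, so (M :&: A) * B and (M :&: B) * A are normal maximal subgroups of G,
   and their intersection (M :&: A) * (M :&: B) lies in M.  An element
   separating M from the other members of a family in general position thus
   avoids one of them, which can replace M.  Repeating this, any such family
   can be traded for one of the same size whose members each contain A or B;
   intersecting with A (resp. B) the members containing B (resp. A) gives
   families in general position in the factors. *)

Section GeneralPosition.

Variable gT : finGroupType.
Implicit Types (G X Y : {set gT}) (F : {set {set gT}}).

Definition maxdim_family G F := [forall X in F, maximal X G] && gen_pos G F.

Definition gen_pos_witness G F X g :=
  [/\ g \in G, g \notin X & {in F :\ X, forall Y, g \in Y}].

Lemma in_capG G F x : (x \in capG G F) = (x \in G) && [forall X in F, x \in X].
Proof. by rewrite /capG inE; congr (_ && _); apply/bigcapP/forall_inP. Qed.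

Lemma gen_posP G F :
  reflect {in F, forall X, exists g, gen_pos_witness G F X g} (gen_pos G F).
Proof.
apply: (iffP forall_inP) => [genF X XF | witF X XF].
  have /properP[_ [g]] := genF X XF; rewrite !in_capG => /andP[Gg /forall_inP FXg].
  rewrite Gg /= => notFg; exists g; split=> //.
  apply: contra notFg => Xg; apply/forall_inP => Y YF.
  by have [->|neYX] := eqVneq Y X; last by apply: FXg; rewrite !inE neYX.
have [g [Gg notXg FXg]] := witF X XF.
apply/properP; split.
  by apply/subsetP => x; rewrite !in_capG => /andP[-> /forall_inP Fx];
    apply/forall_inP => Y /setD1P[_ /Fx].
exists g; first by rewrite in_capG Gg; apply/forall_inP.
by rewrite in_capG Gg; apply: contra notXg => /forall_inP; apply.
Qed.

Lemma gen_posS G F1 F2 : F1 \subset F2 -> gen_pos G F2 -> gen_pos G F1.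
Proof.
move=> sF12 /gen_posP witF2; apply/gen_posP => X XF1.
have [g [Gg notXg F2Xg]] := witF2 X (subsetP sF12 X XF1).
by exists g; split=> // Y /setD1P[neYX /(subsetP sF12) YF2]; apply: F2Xg; rewrite !inE neYX.
Qed.

Lemma maxdim_familyS G F1 F2 :
  F1 \subset F2 -> maxdim_family G F2 -> maxdim_family G F1.
Proof.
move=> sF12 /andP[/forall_inP maxF2 genF2]; rewrite /maxdim_family (gen_posS sF12) //.
by rewrite andbT; apply/forall_inP => X /(subsetP sF12) /maxF2.
Qed.

Lemma leq_MaxDim G F : maxdim_family G F -> #|F| <= MaxDim G.
Proof. exact: leq_bigmax_cond. Qed.

Lemma MaxDim_attained G : exists2 F, maxdim_family G F & #|F| = MaxDim G.
Proof.
have family0 : maxdim_family G set0 by apply/andP; split; apply/forall_inP => X; rewrite inE.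
have nonempty : 0 < #|maxdim_family G| by apply/card_gt0P; exists set0.
by have [F] := eq_bigmax_cond (fun F => #|F|) nonempty; exists F.
Qed.

Lemma maximal_group X G : maximal X G -> exists H : {group gT}, X = H.
Proof. by case/maxsetp/andP => gX _; exists (Group gX). Qed.

Lemma maximal_proper X G : maximal X G -> X \proper G.
Proof.
by move=> maxX; have [H eX] := maximal_group maxX; rewrite eX in maxX *; exact: maxgroupp maxX.
Qed.

Lemma maximal_sub X G : maximal X G -> X \subset G.
Proof. by move/maximal_proper/proper_sub. Qed.

Lemma gen_pos_exchange (G N : {group gT}) F M r :
    maxdim_family G F -> M \in F -> gen_pos_witness G F M r ->
    N <| G -> maximal N G -> r \notin N ->
  maxdim_family G (gval N |: (F :\ M)) /\ #|gval N |: (F :\ M)| = #|F|.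
Proof.
move=> /andP[/forall_inP maxF /gen_posP witF] MF [Gr notMr FMr] nsNG maxN notNr.
have notFMN : gval N \notin F :\ M by apply: contra notNr => /FMr.
split; last by rewrite cardsU1 notFMN (cardsD1 M F) MF.
apply/andP; split.
  by apply/forall_inP => X /setU1P[-> // | /setD1P[_ /maxF]].
have FMgroup Y : Y \in F :\ M -> exists H : {group gT}, Y = H.
  by case/setD1P => _ /maxF/maximal_group.
have FMr_cycle Y : Y \in F :\ M -> <[r]> \subset Y.
  by move=> FMY; have [HY eY] := FMgroup Y FMY; rewrite eY cycle_subG -eY FMr.
apply/gen_posP => X /setU1P[-> | FMX].
  by exists r; split=> // Y /setD1P[neYN /setU1P[eYN | /FMr //]]; rewrite eYN eqxx in neYN.
have [g [Gg notXg FXg]] := witF X (setD1P FMX).2.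
(* The <[r]>-component of g lies in every member except M, so may be dropped. *)
have defG : N * <[r]> = G.
  by apply: mulg_normal_maximal; rewrite ?cycle_subG.
have /mulsgP[n c Nn rc defg] : g \in N * <[r]> by rewrite defG.
have [HX eX] := FMgroup X FMX.
have Xc := subsetP (FMr_cycle X FMX) c rc.
exists n; split.
- exact: (subsetP (normal_sub nsNG)).
- by apply: contra notXg => Xn; rewrite defg eX groupM // -eX.
move=> Y /setD1P[neYX /setU1P[-> // | FMY]].
have [HY eY] := FMgroup Y FMY.
have Yg : g \in Y by apply: FXg; rewrite !inE neYX (setD1P FMY).2.
have Yc := subsetP (FMr_cycle Y FMY) c rc.
by move: Yg; rewrite defg eY groupMr // -eY.
Qed.

End GeneralPosition.

Lemma leq_MaxDim_isog gT rT (G : {group gT}) (R : {group rT}) :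
  G \isog R -> MaxDim G <= MaxDim R.
Proof.
case/isogP => f injf <-.
have [F /andP[/forall_inP maxF /gen_posP witF] <-] := MaxDim_attained G.
have sFG X : X \in F -> X \subset G by move/maxF/maximal_sub.
have injF : {in F &, injective (fun X => f @* X)}.
  by move=> X Y /sFG sXG /sFG sYG; apply: injm_morphim_inj.
rewrite -(card_in_imset injF); apply: leq_MaxDim; apply/andP; split.
  apply/forall_inP => _ /imsetP[X XF ->].
  by have [H eX] := maximal_group (maxF X XF); rewrite eX injm_maximal // -eX ?maxF ?sFG.
apply/gen_posP => _ /imsetP[X XF ->].
have [g [Gg notXg FXg]] := witF X XF.
exists (f g); split; first exact: mem_morphim.
  by apply: contra notXg => /morphimP[x Gx Xx /(injmP injf) -> //].
move=> Y' /setD1P[neYX /imsetP[Y YF eY]]; rewrite {Y'}eY in neYX *.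
apply: mem_morphim; rewrite // FXg // !inE YF andbT.
by apply: contra neYX => /eqP ->.
Qed.

Lemma MaxDim_isog gT rT (G : {group gT}) (R : {group rT}) :
  G \isog R -> MaxDim G = MaxDim R.
Proof.
by move=> isoGR; apply/eqP; rewrite eqn_leq !leq_MaxDim_isog // -isog_sym.
Qed.

Lemma mulg_maximal_normal gT (G M N : {group gT}) :
  maximal M G -> N <| G -> ~~ (N \subset M) -> M * N = G.
Proof.
case/maxgroupP=> /andP[sMG _] maxM /andP[sNG nNG] notNM.
rewrite -norm_joinEl ?(subset_trans sMG) //; apply/eqP.
rewrite eqEproper join_subG sMG sNG /=; apply: contra notNM => ltMNG.
by rewrite -(maxM _ ltMNG (joing_subl M N)) joing_subr.
Qed.

Section DirectProductSubgroups.

Variables (gT : finGroupType) (A B G : {group gT}).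
Hypothesis defG : A \x B = G.
Implicit Types (X Y Z : {set gT}) (F : {set {set gT}}).

Lemma dprod_mulgIl (C : {set gT}) : C \subset A -> C * B :&: A = C.
Proof.
by have [_ _ _ tiAB] := dprodP defG; move=> sCA; rewrite -group_modl // setIC tiAB mulg1.
Qed.

Lemma dprod_setIMl (Z : {group gT}) : B \subset Z -> Z \subset G -> (Z :&: A) * B = Z.
Proof.
by have [_ defAB _ _] := dprodP defG; move=> sBZ sZG; rewrite group_modr // defAB; apply/setIidPl.
Qed.

Lemma dprod_mulg_proper (C : {set gT}) : C \subset A -> (C * B \proper G) = (C \proper A).
Proof.
have [_ defAB _ _] := dprodP defG.
move=> sCA; rewrite !properEneq sCA -defAB mulSg //= !andbT; congr negb.
apply/eqP/eqP => [eCBAB | -> //].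
by rewrite -(dprod_mulgIl sCA) eCBAB dprod_mulgIl.
Qed.

Lemma dprod_joinEl (C : {group gT}) : C \subset A -> C <*> B = C * B.
Proof.
have [_ _ cAB _] := dprodP defG.
by move=> sCA; rewrite cent_joinEr // (subset_trans cAB) ?centS.
Qed.

Lemma maximal_dprod_mulg (Y : {group gT}) : maximal Y A -> maximal (Y * B) G.
Proof.
case/maxgroupP=> ltYA maxY; have sYA := proper_sub ltYA.
rewrite -dprod_joinEl //; apply/maxgroupP; split=> [|Z ltZG sYBZ].
  by rewrite /= dprod_joinEl ?dprod_mulg_proper.
apply: val_inj; rewrite /= dprod_joinEl // in sYBZ *.
have sBZ : B \subset Z := subset_trans (mulG_subr Y B) sYBZ.
have sYZA : Y \subset Z :&: A by rewrite subsetI (subset_trans (mulG_subl B Y)).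
rewrite -(dprod_setIMl sBZ (proper_sub ltZG)) [Z :&: A]maxY //.
by rewrite /= -dprod_mulg_proper ?subsetIr // (dprod_setIMl sBZ (proper_sub ltZG)).
Qed.

Lemma maximal_dprod_setI (X : {group gT}) :
  maximal X G -> B \subset X -> maximal (X :&: A) A.
Proof.
case/maxgroupP=> ltXG maxX sBX; have sXG := proper_sub ltXG.
apply/maxgroupP; split=> [|C ltCA sXAC].
  by rewrite -dprod_mulg_proper ?subsetIr // dprod_setIMl.
have sCA := proper_sub ltCA.
have ltCBG : C <*> B \proper G by rewrite dprod_joinEl ?dprod_mulg_proper.
have sXCB : X \subset C <*> B.
  by rewrite dprod_joinEl // -(dprod_setIMl sBX sXG) mulSg.
by rewrite -(dprod_mulgIl sCA) -dprod_joinEl // (maxX _ ltCBG sXCB).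
Qed.

Lemma normal_dprod_setI (M : {group gT}) :
  maximal M G -> ~~ (B \subset M) -> M :&: A <| G.
Proof.
have [_ _ cAB _] := dprodP defG; have [nsAG nsBG] := dprod_normal2 defG.
move=> maxM notBM; have sMG := maximal_sub maxM.
rewrite /normal (subset_trans (subsetIr M A) (normal_sub nsAG)) /=.
rewrite -(mulg_maximal_normal maxM nsBG notBM) mul_subG //.
  by rewrite normsI ?normG ?(subset_trans sMG (normal_norm nsAG)).
by rewrite (subset_trans cAB) // (subset_trans (centS (subsetIr M A))) ?cent_sub.
Qed.

Lemma maxnormal_dprod_setI (M : {group gT}) :
  maximal M G -> ~~ (A \subset M) -> ~~ (B \subset M) -> maxnormal (M :&: A) A A.
Proof.
have [_ defAB cAB _] := dprodP defG; have [/andP[sAG _] _] := dprod_normal2 defG.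
move=> maxM notAM notBM; have /andP[_ nMA_G] := normal_dprod_setI maxM notBM.
apply/maxgroupP; split=> [|C /andP[ltCA nCA] sMAC].
  by rewrite /= properE subsetIr subsetI subxx andbT notAM (subset_trans sAG).
have sCA := proper_sub ltCA.
apply/eqP; rewrite eqEsubset sMAC andbT subsetI sCA andbT.
apply: contraR (proper_subn ltCA) => notCM.
have nsCG : C <| G.
  rewrite /normal (subset_trans sCA sAG) -defAB mul_subG //.
  by rewrite (subset_trans cAB) // (subset_trans (centS sCA)) ?cent_sub.
rewrite -(setIidPl sAG) -(mulg_maximal_normal maxM nsCG notCM) -group_modr //.
by rewrite mul_subG // setIC.
Qed.

Lemma index_dprod_setI (M : {group gT}) :
  maximal M G -> ~~ (A \subset M) -> #|A : M :&: A| = #|G : M|.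
Proof.
have [nsAG _] := dprod_normal2 defG.
by move=> maxM notAM; rewrite setIC indexgI -indexMg (mulg_maximal_normal maxM nsAG notAM).
Qed.

Lemma maximal_normal_dprod_join (M : {group gT}) :
    maximal M G -> ~~ (A \subset M) -> ~~ (B \subset M) -> prime #|G : M| ->
  (M :&: A) <*> B <| G /\ maximal ((M :&: A) <*> B) G.
Proof.
have [_ nsBG] := dprod_normal2 defG.
move=> maxM notAM notBM prime_iM; rewrite dprod_joinEl ?subsetIr //; split.
  exact: normalM (normal_dprod_setI maxM notBM) nsBG.
by apply: maximal_dprod_mulg; apply: p_index_maximal; rewrite ?subsetIr ?index_dprod_setI.
Qed.

Lemma leq_family_MaxDim_dprod F :
  maxdim_family G F -> {in F, forall X, B \subset X} -> #|F| <= MaxDim A.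
Proof.
have [_ defAB _ _] := dprodP defG.
move=> /andP[/forall_inP maxF /gen_posP witF] sBF.
have groupF X : X \in F -> exists H : {group gT}, X = H by move/maxF/maximal_group.
have defF X : X \in F -> (X :&: A) * B = X.
  by move=> XF; have [H eX] := groupF X XF; rewrite eX dprod_setIMl -?eX ?sBF ?maximal_sub ?maxF.
have injF : {in F &, injective (fun X => X :&: A)}.
  by move=> X Y XF YF eXY; rewrite -(defF X XF) -(defF Y YF) /= eXY.
rewrite -(card_in_imset injF); apply: leq_MaxDim; apply/andP; split.
  apply/forall_inP => _ /imsetP[X XF ->]; have [H eX] := groupF X XF.
  by rewrite eX maximal_dprod_setI -?eX ?maxF ?sBF.
apply/gen_posP => _ /imsetP[X XF ->].
have [g [Gg notXg FXg]] := witF X XF.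
have /mulsgP[a b Aa Bb defg] : g \in A * B by rewrite defAB.
exists a; split=> //.
  have [H eX] := groupF X XF; have Xb := subsetP (sBF X XF) b Bb.
  by rewrite inE Aa andbT; apply: contra notXg; rewrite defg eX => Ha; rewrite groupM // -eX.
move=> Z /setD1P[neZXA /imsetP[Y YF eZ]]; rewrite {Z}eZ in neZXA *.
have [H eY] := groupF Y YF; have Yb := subsetP (sBF Y YF) b Bb.
have Yg : g \in Y by apply: FXg; rewrite !inE YF andbT; apply: contra neZXA => /eqP ->.
by rewrite inE Aa andbT; move: Yg; rewrite defg eY groupMr // -eY.
Qed.

Lemma gen_pos_witness_dprod_mulg F1 F Y a :
    Y \subset A -> gen_pos_witness A F1 Y a -> {in F, forall X, A \subset X} ->
  gen_pos_witness G ([set Z * B | Z in F1] :|: F) (Y * B) a.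
Proof.
have [/andP[sAG _] _] := dprod_normal2 defG.
move=> sYA [Aa notYa F1Ya] sAF; split; first exact: subsetP sAG a Aa.
  by apply: contra notYa => YBa; rewrite -(dprod_mulgIl sYA) inE YBa.
move=> X /setD1P[neXYB /setUP[/imsetP[Z ZF1 eX] | /sAF/subsetP-> //]].
rewrite {X}eX in neXYB *; rewrite -[a]mulg1 mem_mulg // F1Ya // !inE ZF1 andbT.
by apply: contraNneq neXYB => ->.
Qed.

End DirectProductSubgroups.

Section DirectProductMaxDim.

Variables (gT : finGroupType) (A B G : {group gT}).
Hypothesis defG : A \x B = G.
Implicit Types (M X Y Z : {set gT}) (F : {set {set gT}}).

Let defBA : B \x A = G. Proof. by rewrite dprodC. Qed.

Lemma leq_MaxDim_dprod : MaxDim A + MaxDim B <= MaxDim G.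
Proof.
have [FA /andP[/forall_inP maxFA /gen_posP witFA] <-] := MaxDim_attained A.
have [FB /andP[/forall_inP maxFB /gen_posP witFB] <-] := MaxDim_attained B.
have sFA Y : Y \in FA -> Y \subset A by move/maxFA/maximal_sub.
have sFB Z : Z \in FB -> Z \subset B by move/maxFB/maximal_sub.
set FAB := [set Y * B | Y in FA]; set FBA := [set Z * A | Z in FB].
have sA_FBA : {in FBA, forall X, A \subset X}.
  by move=> _ /imsetP[Z /maxFB/maximal_group[H ->] ->]; apply: mulG_subr.
have sB_FAB : {in FAB, forall X, B \subset X}.
  by move=> _ /imsetP[Y /maxFA/maximal_group[H ->] ->]; apply: mulG_subr.
have card_FAB : #|FAB| = #|FA|.
  apply: card_in_imset => Y1 Y2 /sFA sY1A /sFA sY2A eY.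
  by rewrite -(dprod_mulgIl defG sY1A) eY (dprod_mulgIl defG).
have card_FBA : #|FBA| = #|FB|.
  apply: card_in_imset => Z1 Z2 /sFB sZ1B /sFB sZ2B eZ.
  by rewrite -(dprod_mulgIl defBA sZ1B) eZ (dprod_mulgIl defBA).
have disjoint_FAB_FBA : FAB :&: FBA = set0.
  apply/setP => X; rewrite !inE; apply/negP => /andP[/imsetP[Y FAY ->] /sA_FBA sAYB].
  have := proper_subn (maximal_proper (maxFA Y FAY)).
  by rewrite -(dprod_mulgIl defG (sFA Y FAY)) subsetI sAYB subxx.
rewrite -card_FAB -card_FBA -cardsUI disjoint_FAB_FBA cards0 addn0.
apply: leq_MaxDim; apply/andP; split.
  apply/forall_inP => X /setUP[/imsetP[Y FAY ->] | /imsetP[Z FBZ ->]].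
    have [H eY] := maximal_group (maxFA Y FAY).
    by rewrite eY (maximal_dprod_mulg defG) // -eY maxFA.
  have [H eZ] := maximal_group (maxFB Z FBZ).
  by rewrite eZ (maximal_dprod_mulg defBA) // -eZ maxFB.
apply/gen_posP => X /setUP[/imsetP[Y FAY ->] | /imsetP[Z FBZ ->]].
  have [a witYa] := witFA Y FAY; exists a.
  exact: (gen_pos_witness_dprod_mulg defG (sFA Y FAY) witYa sA_FBA).
have [b witZb] := witFB Z FBZ; exists b; rewrite setUC.
exact: (gen_pos_witness_dprod_mulg defBA (sFB Z FBZ) witZb sB_FAB).
Qed.

Lemma prime_index_dprod_maximal (M : {group gT}) :
    solvable A || solvable B ->
    maximal M G -> ~~ (A \subset M) -> ~~ (B \subset M) ->
  prime #|G : M|.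
Proof.
move=> solAB maxM notAM notBM; case/orP: solAB => [solA | solB].
  rewrite -(index_dprod_setI defG) //.
  exact: index_maxnormal_sol_prime solA (maxnormal_dprod_setI defG maxM notAM notBM).
rewrite -(index_dprod_setI defBA) //.
exact: index_maxnormal_sol_prime solB (maxnormal_dprod_setI defBA maxM notBM notAM).
Qed.

Lemma dprod_setI_joins_sub (M : {group gT}) :
  (M :&: A) <*> B :&: ((M :&: B) <*> A) \subset M.
Proof.
rewrite (dprod_joinEl defG) ?subsetIr // -group_modl; last first.
  exact: subset_trans (subsetIr M A) (joing_subr _ _).
rewrite /= (dprod_joinEl defBA) ?subsetIr // [B :&: _]setIC (dprod_mulgIl defBA) ?subsetIr //.
by rewrite mul_subG ?subsetIl.
Qed.

Lemma dprod_maximal_exchange M r :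
    solvable A || solvable B ->
    maximal M G -> ~~ (A \subset M) -> ~~ (B \subset M) -> r \notin M ->
  exists N : {group gT},
    [/\ N <| G, maximal N G, r \notin N & (A \subset N) || (B \subset N)].
Proof.
move=> solAB maxM notAM notBM notMr; have [H defM] := maximal_group maxM; subst M.
have prime_iH := prime_index_dprod_maximal solAB maxM notAM notBM.
have [nsHA_B maxHA_B] := maximal_normal_dprod_join defG maxM notAM notBM prime_iH.
have [nsHB_A maxHB_A] := maximal_normal_dprod_join defBA maxM notBM notAM prime_iH.
have [HA_Br | notHA_Br] := boolP (r \in (H :&: A) <*> B); last first.
  by exists ((H :&: A) <*> B)%G; rewrite joing_subr orbT.
have [HB_Ar | notHB_Ar] := boolP (r \in (H :&: B) <*> A); last first.
  by exists ((H :&: B) <*> A)%G; rewrite joing_subr.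
by rewrite (subsetP (dprod_setI_joins_sub H)) ?inE ?HA_Br in notMr.
Qed.

Lemma dprod_factor_family F :
    solvable A || solvable B -> maxdim_family G F ->
  exists F', [/\ maxdim_family G F', #|F'| = #|F|
               & {in F', forall X, (A \subset X) || (B \subset X)}].
Proof.
move=> solAB.
pose diagonal F := [set X in F | ~~ ((A \subset X) || (B \subset X))].
have [n] := ubnP #|diagonal F|; elim: n F => // n IHn F lt_diagF_n famF.
have [diagF0 | [M diagFM]] := set_0Vmem (diagonal F).
  exists F; split=> // X FX; apply: contraT => notABX.
  by have := in_set0 X; rewrite -diagF0 inE FX notABX.
move: (diagFM); rewrite inE negb_or => /and3P[FM notAM notBM].
have /andP[/forall_inP maxF /gen_posP witF] := famF.
have [r witMr] := witF M FM; have [_ notMr _] := witMr.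
have [N [nsNG maxN notNr sABN]] :=
  dprod_maximal_exchange solAB (maxF M FM) notAM notBM notMr.
have [famFN card_FN] := gen_pos_exchange famF FM witMr nsNG maxN notNr.
have sub_diag : diagonal (gval N |: (F :\ M)) \subset diagonal F :\ M.
  apply/subsetP => X; rewrite !inE => /andP[/orP[/eqP -> | /andP[neXM FX]] notABX].
    by rewrite sABN in notABX.
  by rewrite neXM FX.
have [|F' [famF' card_F' factorF']] := IHn _ _ famFN.
  apply: leq_ltn_trans (subset_leq_card sub_diag) _.
  by move: lt_diagF_n; rewrite (cardsD1 M) diagFM add1n ltnS.
by exists F'; rewrite card_F' card_FN.
Qed.

Theorem MaxDim_dprod : solvable A || solvable B -> MaxDim G = MaxDim A + MaxDim B.
Proof.
move=> solAB; apply/eqP; rewrite eqn_leq leq_MaxDim_dprod andbT.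
have [F famF <-] := MaxDim_attained G.
have [F' [famF' <- factorF']] := dprod_factor_family solAB famF.
rewrite -(cardsID [set X : {set gT} | B \subset X] F') leq_add //.
  apply: (leq_family_MaxDim_dprod defG (maxdim_familyS (subsetIl _ _) famF')).
  by move=> X; rewrite !inE => /andP[].
apply: (leq_family_MaxDim_dprod defBA (maxdim_familyS (subsetDl _ _) famF')).
by move=> X; rewrite !inE => /andP[notBX /factorF']; rewrite (negPf notBX) orbF.
Qed.

End DirectProductMaxDim.

Theorem corollary2p4 (gT1 gT2 : finGroupType) (H : {group gT1}) (K : {group gT2}) :
  solvable H || solvable K ->
  MaxDim (setX H K) = MaxDim H + MaxDim K.
Proof.
move=> solHK.
rewrite (MaxDim_isog (isog_setX1 gT2 H)) (MaxDim_isog (isog_set1X gT1 K)).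
apply: MaxDim_dprod (setX_dprod H K) _.
by rewrite -(isog_sol (isog_setX1 gT2 H)) -(isog_sol (isog_set1X gT1 K)).
Qed.
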